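(* Let $(\mathcal A,r)$ be a population game, $\mathcal G=(\mathcal H,\boldsymbol\eta,W)$ an undirected connected community network, and $\mathbf f$ an imitation mechanism satisfying Assumption 1. Let $\mathbf x^\bullet\in\mathcal X^\bullet\setminus\mathcal X^*$ and $\mathbf y^\bullet=\mathbf x^\bullet\mathbf 1$, and let $i\in\mathcal A$ be an action with $r_i(\mathbf y^\bullet)>r_j(\mathbf y^\bullet)$ for all $j\in\mathcal S_{\mathbf y^\bullet}$. Then there exists $\varepsilon>0$ such that for every $\mathbf x\in\mathcal X$ with $\|\mathbf x-\mathbf x^\bullet\|<\varepsilon$ and $y_i>0$ (where $\mathbf y=\mathbf x\mathbf 1$), one has $\dot y_i>0$, where $\dot y_i=\sum_{h\in\mathcal H}\dot x_{ih}$ is computed from the right-hand side of the network imitation dynamics at $\mathbf x$.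
   Context: Let $\mathcal A$ be a finite set of actions, $\mathcal Y=\{\mathbf y\in\mathbb R_+^{\mathcal A}:\mathbf 1^\top\mathbf y=1\}$, reward functions $r_i:\mathcal Y\to\mathbb R$. Community network $\mathcal G=(\mathcal H,\boldsymbol\eta,W)$: finite $\mathcal H$, $\eta_h>0$ with $\sum_h\eta_h=1$, nonnegative $W$ with positive diagonal; connected = $W$ irreducible; undirected = $W=W^\top$. $\mathcal X=\{\mathbf x\in\mathbb R_+^{\mathcal A\times\mathcal H}:\mathbf 1^\top\mathbf x=\boldsymbol\eta^\top\}$. Imitation mechanism: Lipschitz $\mathbf f:\mathcal Y\to\mathbb R_+^{\mathcal A\times\mathcal A}$. Dynamics: $$\dot x_{ih}=\sum_{j\in\mathcal A}\sum_{k\in\mathcal H}\big(x_{jh}W_{hk}x_{ik}f_{ji}(\mathbf x\mathbf 1)-x_{ih}W_{hk}x_{jk}f_{ij}(\mathbf x\mathbf 1)\big).$$ Assumption 1: $\operatorname{sgn}(f_{ij}(\mathbf y)-f_{ji}(\mathbf y))=\operatorname{sgn}(r_j(\mathbf y)-r_i(\mathbf y))$ for all $i,j,\mathbf y$. Support $\mathcal S_{\mathbf y}=\{i:y_i>0\}$. Nash equilibria: $\mathcal Y^*=\{\mathbf y\in\mathcal Y: y_i>0\Rightarrow r_i(\mathbf y)=\max_{j\in\mathcal A}r_j(\mathbf y)\}$; restricted Nash equilibria: $\mathcal Y^\bullet=\{\mathbf y\in\mathcal Y:y_i>0,y_j>0\Rightarrow r_i(\mathbf y)=r_j(\mathbf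 y)\}$; $\mathcal X^*=\{\mathbf x\in\mathcal X:\mathbf x\mathbf 1\in\mathcal Y^*\}$, $\mathcal X^\bullet=\{\mathbf x\in\mathcal X:\mathbf x\mathbf 1\in\mathcal Y^\bullet\}$. *)

(* Strategies/actions: finType A; communities: finType H;
   scalars: R : realType.  Vectors in R^A are functions A -> R,
   states x in R^(A x H) are functions A -> H -> R. *)
From HB Require Import structures.
From mathcomp Require Import all_boot all_order all_algebra.
From mathcomp Require Import reals.
Set Implicit Arguments. Unset Strict Implicit. Unset Printing Implicit Defensive.
Import Order.TTheory GRing.Theory Num.Theory.
Local Open Scope ring_scope.

Section Defs.
Variables (R : realType) (A H : finType).

Definition inY (y : A -> R) : Prop :=
  (forall i, 0 <= y i) /\ \sum_(i : A) y i = 1.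

Definition distY (y y' : A -> R) : R := \big[Num.max/0]_(i : A) `|y i - y' i|.
Definition distX (x x' : A -> H -> R) : R :=
  \big[Num.max/0]_(i : A) \big[Num.max/0]_(h : H) `|x i h - x' i h|.

Definition population_game (r : A -> (A -> R) -> R) : Prop :=
  forall i (y : A -> R), inY y -> forall e : R, 0 < e ->
    exists2 d : R, 0 < d & forall y', inY y' -> distY y' y < d ->
      `|r i y' - r i y| < e.

Definition community_network (eta : H -> R) (W : H -> H -> R) : Prop :=
  (forall h, 0 < eta h) /\ \sum_(h : H) eta h = 1 /\
  (forall h k, 0 <= W h k) /\ (forall h, 0 < W h h).

Definition connected_net (W : H -> H -> R) : Prop :=
  forall S : {set H}, S != set0 -> S != [set: H] ->
    exists h, exists k, [/\ h \in S, k \notin S & 0 < W h k].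

Definition undirected_net (W : H -> H -> R) : Prop := forall h k, W h k = W k h.

Definition inX (eta : H -> R) (x : A -> H -> R) : Prop :=
  (forall i h, 0 <= x i h) /\ (forall h, \sum_(i : A) x i h = eta h).

Definition aggr (x : A -> H -> R) : A -> R := fun i => \sum_(h : H) x i h.

Definition imitation_mechanism (f : (A -> R) -> A -> A -> R) : Prop :=
  (forall y, inY y -> forall i j, 0 <= f y i j) /\
  exists L : R, forall y y', inY y -> inY y' -> forall i j,
      `|f y i j - f y' i j| <= L * distY y y'.

Definition assumption1 (r : A -> (A -> R) -> R) (f : (A -> R) -> A -> A -> R) :=
  forall i j y, inY y -> Num.sg (f y i j - f y j i) = Num.sg (r j y - r i y).

Definition suppY (y : A -> R) : pred A := fun i => 0 < y i.

Definition nashY (r : A -> (A -> R) -> R) (y : A -> R) : Prop :=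
  inY y /\ forall i, 0 < y i -> forall j, r j y <= r i y.

Definition rnashY (r : A -> (A -> R) -> R) (y : A -> R) : Prop :=
  inY y /\ forall i j, 0 < y i -> 0 < y j -> r i y = r j y.

Definition nashX r eta x := inX eta x /\ nashY r (aggr x).
Definition rnashX r eta x := inX eta x /\ rnashY r (aggr x).

Definition xdot (W : H -> H -> R) (f : (A -> R) -> A -> A -> R)
    (x : A -> H -> R) (i : A) (h : H) : R :=
  \sum_(j : A) \sum_(k : H)
     (x j h * W h k * x i k * f (aggr x) j i - x i h * W h k * x j k * f (aggr x) i j).

Definition ydot W f x (i : A) : R := \sum_(h : H) xdot W f x i h.

End Defs.

Set Warnings "-notation-overridden,-ambiguous-paths".

From HB Require Import structures.
From mathcomp Require Import all_boot all_order all_algebra.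
From mathcomp Require Import reals ring lra.
Set Implicit Arguments. Unset Strict Implicit. Unset Printing Implicit Defensive.
Import Order.TTheory GRing.Theory Num.Theory.
Local Open Scope ring_scope.

(* For an undirected network the
   aggregate velocity factors as
     ydot_i = sum_k x_ik Q_k,   Q_k = sum_j g_j(y) sum_h x_jh W_hk,
   where g_j = f_ji - f_ij is the net advantage of i over j.  By Assumption 1,
   g_j(yb) > 0 on the support of yb, and by Lipschitz continuity of f this
   persists near yb with margin c, while off the support g_j is only bounded
   below by -M but the masses x_jh are at most the distance d to xb.  Hence
   Q_k >= c W_kk eta_k - d |A| (c W_kk + M sum_h W_hk), which is positive for
   d small, uniformly over the finitely many communities k; and a sum
   sum_k x_ik Q_k with x_i. >= 0, sum_k x_ik > 0 and all Q_k > 0 is positive.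
   The argument only uses the strict reward gap on the support, Assumption 1,
   the Lipschitz bound on f, symmetry of W and positivity of eta and of the
   diagonal of W. *)

Section FiniteFamilies.
Variables (R : realType) (T : finType).

Lemma fin_min_pos (P : pred T) (a : T -> R) :
  (forall t, P t -> 0 < a t) -> exists2 m : R, 0 < m & forall t, P t -> m <= a t.
Proof.
move=> a_pos; exists (\big[Num.min/1]_(t | P t) a t).
  by elim/big_ind: _ => // u v u_pos v_pos; rewrite lt_min u_pos v_pos.
by move=> t Pt; apply: bigmin_le_cond.
Qed.

Lemma fin_lower_bound (a : T -> R) :
  exists2 M : R, 0 <= M & forall t, - M <= a t.
Proof.
exists (\sum_t `|a t|); first by apply: sumr_ge0.
move=> t; have : `|a t| <= \sum_t `|a t|.
  by rewrite (bigD1 t) //= lerDl; apply: sumr_ge0.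
by rewrite ler_norml => /andP[].
Qed.

Lemma small_perturbation (P B : T -> R) :
  (forall t, 0 < P t) -> (forall t, 0 <= B t) ->
  exists2 e : R, 0 < e & forall d, 0 <= d -> d < e -> forall t, d * B t < P t.
Proof.
move=> P_pos B_ge0.
have [e e_pos e_le] := @fin_min_pos xpredT (fun t => P t / (B t + 1))
  (fun t _ => divr_gt0 (P_pos t) (ltr_wpDl (B_ge0 t) ltr01)).
exists e => // d d_ge0 d_lt t.
have Bt1 : 0 < B t + 1 by rewrite ltr_wpDl ?B_ge0.
have : d * (B t + 1) < P t.
  by rewrite -ltr_pdivlMr //; apply: lt_le_trans d_lt (e_le t isT).
have := B_ge0 t; nra.
Qed.

Lemma sum_weighted_pos (w b : T -> R) :
  (forall t, 0 <= w t) -> 0 < \sum_t w t -> (forall t, 0 < b t) ->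
  0 < \sum_t w t * b t.
Proof.
move=> w_ge0 w_pos b_pos.
have [q q_pos q_le] := @fin_min_pos xpredT b (fun t _ => b_pos t).
apply: lt_le_trans (_ : 0 < q * \sum_t w t) _; first by rewrite mulr_gt0.
rewrite mulr_sumr; apply: ler_sum => t _; rewrite mulrC.
by apply: ler_wpM2l; [exact: w_ge0 | exact: q_le].
Qed.

End FiniteFamilies.

Section StatesAndDistances.
Variables (R : realType) (A H : finType).
Implicit Types (x : A -> H -> R) (eta : H -> R).

Lemma distY_ge0 (y y' : A -> R) : 0 <= distY y y'.
Proof. by rewrite /distY; elim/big_ind: _ => // u v; rewrite le_max => ->. Qed.

Lemma distX_ge0 x x' : 0 <= distX x x'.
Proof.
rewrite /distX; elim/big_ind: _ => // [u v|j _]; first by rewrite le_max => ->.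
by elim/big_ind: _ => // u v; rewrite le_max => ->.
Qed.

Lemma le_distX x x' j h : `|x j h - x' j h| <= distX x x'.
Proof.
apply: le_trans (le_bigmax 0 (fun j => \big[Num.max/0]_h `|x j h - x' j h|) j).
exact: (le_bigmax 0 (fun h => `|x j h - x' j h|) h).
Qed.

Lemma distY_aggr x x' : distY (aggr x) (aggr x') <= #|H|%:R * distX x x'.
Proof.
rewrite /distY; apply: bigmax_le => [|j _]; first by rewrite mulr_ge0 ?distX_ge0.
rewrite /aggr -sumrB; apply: le_trans (ler_norm_sum _ _ _) _.
rewrite -sum1_card natr_sum mulr_suml; apply: ler_sum => h _.
by rewrite mul1r le_distX.
Qed.

Lemma aggr_near x x' (e : R) : 0 < e ->
  distX x x' < e / (#|H|%:R + 1) -> distY (aggr x) (aggr x') < e.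
Proof.
move=> e_pos near; have H1 : 0 < #|H|%:R + 1 :> R by rewrite ltr_wpDl.
rewrite ltr_pdivlMr // in near.
apply: le_lt_trans (distY_aggr x x') _.
have := distX_ge0 x x'; nra.
Qed.

Lemma inY_aggr eta x : \sum_h eta h = 1 -> inX eta x -> inY (aggr x).
Proof.
move=> eta1 [x_ge0 x_mass]; split => [j|].
  by apply: sumr_ge0 => h _; exact: x_ge0.
by rewrite /aggr exchange_big /=; under eq_bigr do rewrite x_mass.
Qed.

Lemma mass_off_support eta x x' j h :
  inX eta x -> inX eta x' -> ~~ (0 < aggr x' j) -> x j h <= distX x x'.
Proof.
move=> [x_ge0 _] [x'_ge0 _]; rewrite -leNgt => yj_le0.
have yj0 : aggr x' j = 0.
  by apply/le_anti; rewrite yj_le0 sumr_ge0 // => h' _; exact: x'_ge0.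
have -> : x j h = `|x j h - x' j h|.
  by rewrite (psumr_eq0P (fun h _ => x'_ge0 j h) yj0) // subr0 ger0_norm.
exact: le_distX.
Qed.

End StatesAndDistances.

Section Velocity.
Variables (R : realType) (A H : finType).
Variables (W : H -> H -> R) (f : (A -> R) -> A -> A -> R).

Definition advantage (i : A) (y : A -> R) (j : A) : R := f y j i - f y i j.

Definition inweight (k : H) : R := \sum_h W h k.

Lemma ydotE (x : A -> H -> R) i : undirected_net W ->
  ydot W f x i = \sum_k x i k *
    \sum_j advantage i (aggr x) j * \sum_h x j h * W h k.
Proof.
move=> W_sym; rewrite /ydot /xdot /advantage; set F := f (aggr x).
rewrite exchange_big /=.
transitivity (\sum_j \sum_h \sum_k x j h * W h k * x i k * (F j i - F i j)).
  apply: eq_bigr => j _; under eq_bigr do rewrite sumrB.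
  rewrite sumrB [X in _ - X]exchange_big /= -sumrB.
  apply: eq_bigr => h _; rewrite -sumrB; apply: eq_bigr => k _.
  by rewrite (W_sym h k); ring.
symmetry; under eq_bigr => k _ do rewrite mulr_sumr.
under eq_bigr => k _ do under eq_bigr => j _ do rewrite !mulr_sumr.
rewrite exchange_big /=; apply: eq_bigr => j _; rewrite exchange_big /=.
by apply: eq_bigr => h _; apply: eq_bigr => k _; ring.
Qed.

Variable eta : H -> R.
Hypothesis W_ge0 : forall h k, 0 <= W h k.

Lemma inweight_ge0 k : 0 <= inweight k.
Proof. by apply: sumr_ge0 => h _; exact: W_ge0. Qed.

Lemma contribution_lower_bound (x : A -> H -> R) (g : A -> R) (c M d : R) j k :
  inX eta x -> 0 <= c -> 0 <= M -> 0 <= d ->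
  (c <= g j \/ (- M <= g j /\ forall h, x j h <= d)) ->
  c * W k k * x j k - d * (c * W k k + M * inweight k) <=
    g j * \sum_h x j h * W h k.
Proof.
move=> [x_ge0 _] c_ge0 M_ge0 d_ge0 gj.
have Wkk := W_ge0 k k; have xjk := x_ge0 j k.
have flow_ge0 : 0 <= \sum_h x j h * W h k by apply: sumr_ge0 => h _; apply: mulr_ge0.
have slack : 0 <= d * (c * W k k + M * inweight k).
  by rewrite mulr_ge0 // addr_ge0 ?mulr_ge0 ?inweight_ge0.
case: gj => [gj_ge | [gj_ge xj_le]].
- have self_flow : x j k * W k k <= \sum_h x j h * W h k.
    by rewrite (bigD1 k) //= lerDl sumr_ge0 // => h _; apply: mulr_ge0.
  have := ler_wpM2r flow_ge0 gj_ge; have := ler_wpM2l c_ge0 self_flow; nra.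
- have flow_le : \sum_h x j h * W h k <= d * inweight k.
    by rewrite /inweight mulr_sumr ler_sum // => h _; rewrite ler_wpM2r.
  have := xj_le k; have := ler_wpM2l M_ge0 flow_le.
  have : 0 <= (g j + M) * \sum_h x j h * W h k by apply: mulr_ge0 => //; lra.
  have : 0 <= c * W k k by rewrite mulr_ge0.
  nra.
Qed.

Lemma flow_lower_bound (x : A -> H -> R) (g : A -> R) (S : pred A) (c M d : R) k :
  inX eta x -> 0 <= c -> 0 <= M -> 0 <= d ->
  (forall j, S j -> c <= g j) -> (forall j, - M <= g j) ->
  (forall j h, ~~ S j -> x j h <= d) ->
  c * W k k * eta k - d * (#|A|%:R * (c * W k k + M * inweight k)) <=
    \sum_j g j * \sum_h x j h * W h k.
Proof.
move=> xX c_ge0 M_ge0 d_ge0 g_in g_ge x_off.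
have per_action j : c * W k k * x j k - d * (c * W k k + M * inweight k) <=
    g j * \sum_h x j h * W h k.
  apply: contribution_lower_bound => //.
  by case: (boolP (S j)) => Sj; [left; exact: g_in | right; split => // h; exact: x_off].
apply: le_trans (ler_sum _ (fun j _ => per_action j)).
rewrite sumrB -mulr_sumr xX.2; apply: lerB => //.
by rewrite sumr_const -mulrnAr mulr_natl.
Qed.

End Velocity.

Lemma advantage_pos (R : realType) (A : finType) r f (y : A -> R) (i j : A) :
  assumption1 r f -> inY y -> r j y < r i y -> 0 < advantage f i y j.
Proof.
move=> A1 yY gap; have := A1 j i y yY.
rewrite /advantage (@gtr0_sg _ (r i y - r j y)) ?subr_gt0 //.
by move/eqP; rewrite sgr_cp0 subr_gt0.
Qed.

Lemma advantage_near (R : realType) (A : finType) f (i : A) (y : A -> R) (e : R) :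
  imitation_mechanism f -> inY y -> 0 < e ->
  exists2 d : R, 0 < d & forall y', inY y' -> distY y' y < d ->
    forall j, advantage f i y j - e <= advantage f i y' j.
Proof.
move=> [_ [L f_lip]] yY e_pos.
have L1 : 0 < 2 * `|L| + 1 by rewrite ltr_wpDl ?mulr_ge0.
exists (e / (2 * `|L| + 1)); first by rewrite divr_gt0.
move=> y' y'Y; rewrite ltr_pdivlMr // => near j.
have lip k l : `|f y' k l - f y k l| <= `|L| * distY y' y.
  exact: le_trans (f_lip _ _ y'Y yY k l) (ler_wpM2r (distY_ge0 _ _) (ler_norm L)).
move: (lip j i) (lip i j); rewrite /advantage !ler_norml => /andP[l1 _] /andP[_ l2].
have : `|L| * distY y' y * 2 <= e by have := distY_ge0 y' y; nra.
lra.
Qed.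

Lemma advantage_margin (R : realType) (A : finType) r f (y : A -> R) (i : A) :
  imitation_mechanism f -> assumption1 r f -> inY y ->
  (forall j, 0 < y j -> r j y < r i y) ->
  exists c : R, exists M : R, exists d : R, [/\ 0 < c, 0 <= M, 0 < d &
    forall y', inY y' -> distY y' y < d -> forall j,
      (0 < y j -> c <= advantage f i y' j) /\ - M <= advantage f i y' j].
Proof.
move=> mech A1 yY i_best.
have [c0 c0_pos g_supp] : exists2 c0 : R, 0 < c0 &
    forall j, 0 < y j -> c0 <= advantage f i y j.
  by apply: fin_min_pos => j yj; apply: advantage_pos (i_best j yj).
have [M0 M0_ge0 g_ge] := fin_lower_bound (advantage f i y).
have c_pos : 0 < c0 / 2 by rewrite divr_gt0.
have [d d_pos g_near] := advantage_near i mech yY c_pos.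
exists (c0 / 2), (M0 + c0 / 2), d; split => // [|y' y'Y near j].
  by rewrite addr_ge0 // ltW.
have := g_near y' y'Y near j; have := g_ge j; move=> g_lb g_near_j.
by split; [move=> yj; have := g_supp j yj; lra | lra].
Qed.

Theorem lemma1 (R : realType) (A H : finType)
  (r : A -> (A -> R) -> R) (eta : H -> R) (W : H -> H -> R)
  (f : (A -> R) -> A -> A -> R) :
  population_game r ->
  community_network eta W -> undirected_net W -> connected_net W ->
  imitation_mechanism f -> assumption1 r f ->
  forall xb : A -> H -> R,
    rnashX r eta xb -> ~ nashX r eta xb ->
  forall i : A,
    (forall j, suppY (aggr xb) j -> r j (aggr xb) < r i (aggr xb)) ->
  exists2 e : R, 0 < e &
    forall x : A -> H -> R, inX eta x -> distX x xb < e -> 0 < aggr x i ->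
      0 < ydot W f x i.
Proof.
move=> _ [eta_pos [eta1 [W_ge0 Wkk_pos]]] W_sym _ mech A1 xb [xbX [ybY _]] _ i i_best.
set yb := aggr xb.
have [c [M [d1 [c_pos M_ge0 d1_pos g_bounds]]]] :=
  advantage_margin mech A1 ybY i_best.
pose B k := #|A|%:R * (c * W k k + M * inweight W k).
have B_ge0 k : 0 <= B k.
  by rewrite mulr_ge0 ?addr_ge0 ?mulr_ge0 ?inweight_ge0 ?W_ge0 // ltW.
have P_pos k : 0 < c * W k k * eta k by rewrite !mulr_gt0.
have [d2 d2_pos perturb] := small_perturbation P_pos B_ge0.
exists (Num.min (d1 / (#|H|%:R + 1)) d2).
  by rewrite lt_min d2_pos divr_gt0 // ltr_wpDl.
move=> x xX; rewrite lt_min => /andP[near_d1 near_d2] yi_pos.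
have gx := g_bounds _ (inY_aggr eta1 xX) (aggr_near d1_pos near_d1).
rewrite ydotE //; apply: sum_weighted_pos yi_pos _ => [k|k]; first exact: xX.1.
have Qk_pos : 0 < c * W k k * eta k - distX x xb * B k.
  by rewrite subr_gt0 perturb ?distX_ge0.
apply: lt_le_trans Qk_pos _.
apply: (flow_lower_bound W_ge0 _ (S := fun j => 0 < yb j)) => //;
  [exact: ltW | exact: distX_ge0 | ..].
- by move=> j yj; case: (gx j) => /(_ yj).
- by move=> j; case: (gx j).
- by move=> j h yj; apply: mass_off_support xX xbX yj.
Qed.
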